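(* Let $X$ be a unital commutative semiring. The following are equivalent: (1) the relation $\sim$ on $\mathcal{S}(X)$ is a congruence and the quotient semiring $\tilde{\mathcal{S}}(X)=\mathcal{S}(X)/\sim$ is upper-bound; (2) $X$ is idempotent, linearly ordered by its intrinsic order, and for all $a,b,x\in X$ with $a<b$ one has $ax=0$ or $ax<bx$.
   Context: A semiring $(X,+,0,\cdot)$: $(X,+,0)$ commutative monoid, $(X,\cdot)$ semigroup, distributivity, $0$ absorbing. Idempotent: $x+x=x$. Intrinsic order: $a\le b$ iff $a+x=b$ for some $x$; $a<b$ means $a\le b$, $a\ne b$; a semiring is upper-bound if its intrinsic order is antisymmetric. $\mathcal{S}(X)=X\times X$ with $(a',a'')+(b',b'')=(a'+b',a''+b'')$ and $(a',a'')(b',b'')=(a'b'+a''b'',a'b''+a''b')$. The relation $\sim$: $(a',a'')\sim(b',b'')$ iff $(a',a'')=(b',b'')$, or ($a'\ne a''$, $b'\ne b''$ and $a'+b''=a''+b'$). A congruence is an equivalence relation respecting addition and multiplication. *)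

From mathcomp Require Import all_boot all_order all_algebra.
Set Implicit Arguments. Unset Strict Implicit. Unset Printing Implicit Defensive.
Import GRing.Theory.
Local Open Scope ring_scope.

Section SemiringDefs.
Variable X : comPzSemiRingType.  (* unital commutative semiring (0 = 1 allowed) *)

Definition ile (a b : X) : Prop := exists x : X, a + x = b.
Definition ilt (a b : X) : Prop := ile a b /\ a <> b.

Definition idempotent_sr : Prop := forall x : X, x + x = x.
Definition linearly_ordered_sr : Prop := forall a b : X, ile a b \/ ile b a.

Definition SX := (X * X)%type.
Definition Sadd (a b : SX) : SX := (a.1 + b.1, a.2 + b.2).
Definition Smul (a b : SX) : SX :=
  (a.1 * b.1 + a.2 * b.2, a.1 * b.2 + a.2 * b.1).

Definition Ssim (a b : SX) : Prop :=
  a = b \/ (a.1 <> a.2 /\ b.1 <> b.2 /\ a.1 + b.2 = a.2 + b.1).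

Definition is_congruence (R : SX -> SX -> Prop) : Prop :=
  [/\ (forall a, R a a), (forall a b, R a b -> R b a),
      (forall a b c, R a b -> R b c -> R a c),
      (forall a a' b b', R a a' -> R b b' -> R (Sadd a b) (Sadd a' b')) &
      (forall a a' b b', R a a' -> R b b' -> R (Smul a b) (Smul a' b'))].

(* Intrinsic order of the quotient S(X)/~, on representatives:
   [a] <= [b] iff exists [x], [a] + [x] = [b], i.e. (a + x) ~ b. *)
Definition quot_ile (a b : SX) : Prop := exists x : SX, Ssim (Sadd a x) b.

(* quotient is upper-bound: its intrinsic order is antisymmetric *)
Definition quot_upper_bound : Prop :=
  forall a b : SX, quot_ile a b -> quot_ile b a -> Ssim a b.
End SemiringDefs.

From mathcomp Require Import all_boot all_order all_algebra.
Set Implicit Arguments. Unset Strict Implicit. Unset Printing Implicit Defensive.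
Import GRing.Theory.
Local Open Scope ring_scope.

(* In an idempotent, linearly ordered X the sum a + b is max(a, b), and every
   ~-class has a canonical representative (m, m), (m, 0) or (0, m), where
   m = a1 + a2 is the magnitude of the pair: ~ is equality of canonical
   representatives.  Canonicalisation commutes with addition because summands
   below the magnitude are absorbed, and with multiplication because of the
   cancellation condition, which says that (m, u) (n, v) with u < m, v < n is
   dominated by m n.  In the quotient, classes compare by magnitude, and of
   the three classes of magnitude m only (m, m) lies above the others, which
   gives antisymmetry.
   Conversely, when one of the three conditions fails, adding or multiplying
   a suitable pair to two non-diagonal ~-related pairs makes exactly one of
   them diagonal, whereas a diagonal pair is ~-related only to itself. *)

Section CongruenceConsequences.
Variable X : comPzSemiRingType.
Hypothesis simC : is_congruence (@Ssim X).

Lemma Ssim_diag_eq (d : X) (q : SX X) : Ssim (d, d) q -> (d, d) = q.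
Proof. by case=> // -[]. Qed.

Lemma Ssim_addr (c a b : SX X) : Ssim a b -> Ssim (Sadd a c) (Sadd b c).
Proof. by case: simC => refl _ _ add _ ab; apply: add ab (refl c). Qed.

Lemma Ssim_mulr (c a b : SX X) : Ssim a b -> Ssim (Smul a c) (Smul b c).
Proof. by case: simC => refl _ _ _ mul ab; apply: mul ab (refl c). Qed.

Lemma idempotent_of_congruence : idempotent_sr X.
Proof.
move=> x; have [//|/eqP nxx] := eqVneq (x + x) x.
have [->|/eqP nx0] := eqVneq x 0; first by rewrite addr0.
have : Ssim (x, 0) (x + x, x) by right; rewrite /= add0r.
move=> /(Ssim_addr (0, x)); rewrite /Sadd /= add0r addr0 => /Ssim_diag_eq.
by case=> /esym.
Qed.

Lemma linearly_ordered_of_congruence : linearly_ordered_sr X.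
Proof.
move=> a b; have [abb|/eqP nabb] := eqVneq (a + b) b; first by left; exists b.
have [aba|/eqP naba] := eqVneq (a + b) a; first by right; exists a; rewrite addrC.
have nb0 : b <> 0 by move=> b0; apply: naba; rewrite b0 addr0.
have : Ssim (a + b, a) (b, 0) by right; rewrite /= addr0.
move=> /(Ssim_addr (0, b)); rewrite /Sadd /= add0r !addr0 => /Ssim_diag_eq.
by case.
Qed.

Lemma mul_ilt_of_congruence (a b x : X) :
  ilt a b -> a * x = 0 \/ ilt (a * x) (b * x).
Proof.
move=> [[w abw] nab]; have [|/eqP nax0] := eqVneq (a * x) 0; first by left.
right; split; first by exists (w * x); rewrite -mulrDl abw.
move=> axbx; have ab_b : a + b = b.
  by rewrite -abw addrA idempotent_of_congruence.
have nb0 : b <> 0 by move=> b0; apply: nax0; rewrite axbx b0 mul0r.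
have : Ssim (b, a) (b, 0) by right; rewrite /= addr0 ab_b; split=> // /esym.
move=> /(Ssim_mulr (x, 0)); rewrite /Smul /= !mulr0 !mul0r !addr0 !add0r -axbx.
by move=> /Ssim_diag_eq [].
Qed.

End CongruenceConsequences.

Section IdempotentLinear.
Variable X : comPzSemiRingType.
Hypothesis addxx : idempotent_sr X.
Hypothesis lin : linearly_ordered_sr X.
Hypothesis mul_ilt :
  forall a b x : X, ilt a b -> a * x = 0 \/ ilt (a * x) (b * x).

Lemma ileE (a b : X) : ile a b <-> a + b = b.
Proof. by split=> [[w <-]|<-]; [rewrite addrA addxx | exists b]. Qed.

Lemma addr_max (a b : X) : a + b = a \/ a + b = b.
Proof. by case: (lin a b) => /ileE ab; [right | left; rewrite addrC]. Qed.

Lemma addr_anti (a b : X) : a + b = b -> b + a = a -> a = b.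
Proof. by move=> ab ba; rewrite -ba addrC ab. Qed.

Lemma addr_trans (a b c : X) : a + b = b -> b + c = c -> a + c = c.
Proof. by move=> ab bc; rewrite -bc addrA ab. Qed.

Lemma order_cases (a b : X) :
  [\/ a = b, a + b = a /\ a <> b | a + b = b /\ a <> b].
Proof.
have [->|/eqP nab] := eqVneq a b; first exact: Or31.
by case: (addr_max a b) => ab; [apply: Or32 | apply: Or33].
Qed.

Lemma mul_lt_or_zero (a b x : X) : a + b = b -> a <> b ->
  a * x = 0 \/ (a * x + b * x = b * x /\ a * x <> b * x).
Proof.
move=> ab nab; have ilt_ab : ilt a b by split=> //; apply/ileE.
by case: (mul_ilt x ilt_ab) => [|[/ileE]]; [left | right].
Qed.

Definition negligible (u m : X) : Prop := u + m = m /\ (u = m -> u = 0).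

Lemma negligible0 (m : X) : negligible 0 m.
Proof. by split; first exact: add0r. Qed.

Lemma negligibleD (u u' m : X) :
  negligible u m -> negligible u' m -> negligible (u + u') m.
Proof.
move=> [um um0] [u'm u'm0]; split; first by rewrite -addrA u'm um.
by case: (addr_max u u') => ->.
Qed.

Lemma negligibleWl (u m m' : X) : negligible u m -> negligible u (m + m').
Proof.
move=> [um um0]; split=> [|e]; first by rewrite addrA um.
by apply/um0/addr_anti => //; rewrite e addrA addxx.
Qed.

Lemma negligibleWr (u m m' : X) : negligible u m' -> negligible u (m + m').
Proof. by rewrite addrC; exact: negligibleWl. Qed.

Lemma negligible_mull (u m x : X) : u + m = m -> u <> m ->
  negligible (u * x) (m * x).
Proof.
move=> um num; case: (mul_lt_or_zero x um num) => [->|[umx numx]].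
  exact: negligible0.
by split=> // /numx.
Qed.

Definition Smag (p : SX X) : X := p.1 + p.2.

Definition Scanon (p : SX X) : SX X :=
  if p.1 == p.2 then p else if p.1 + p.2 == p.1 then (p.1, 0) else (0, p.2).

Definition Sswap (p : SX X) : SX X := (p.2, p.1).

Lemma Scanon_diag (a : X) : Scanon (a, a) = (a, a).
Proof. by rewrite /Scanon /= eqxx. Qed.

Lemma Scanon_pos (a b : X) : a + b = a -> a <> b -> Scanon (a, b) = (a, 0).
Proof. by move=> ab /eqP/negbTE nab; rewrite /Scanon /= nab ab eqxx. Qed.

Lemma Scanon_neg (a b : X) : a + b = b -> a <> b -> Scanon (a, b) = (0, b).
Proof.
by move=> ab /eqP/negbTE nab; rewrite /Scanon /= nab ab eq_sym nab.
Qed.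

Lemma Scanon_swap (p : SX X) : Scanon (Sswap p) = Sswap (Scanon p).
Proof.
case: p => a b; case: (order_cases a b) => [<-|[ab nab]|[ab nab]].
- by rewrite /Sswap /= Scanon_diag.
- rewrite (Scanon_pos ab nab) /Sswap /= Scanon_neg //; first by rewrite addrC.
  by move/esym.
- rewrite (Scanon_neg ab nab) /Sswap /= Scanon_pos //; first by rewrite addrC.
  by move/esym.
Qed.

Lemma Smul_comm (p q : SX X) : Smul p q = Smul q p.
Proof. by rewrite /Smul !(mulrC p.1) !(mulrC p.2) (addrC (q.2 * p.1)). Qed.

Lemma Smul_swapl (p q : SX X) : Smul (Sswap p) q = Sswap (Smul p q).
Proof. by rewrite /Smul /Sswap /=; congr pair; apply: addrC. Qed.

Lemma Smul_swapr (p q : SX X) : Smul p (Sswap q) = Sswap (Smul p q).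
Proof. by rewrite Smul_comm Smul_swapl Smul_comm. Qed.

Lemma Scanon_Smul_pos (m u n v : X) : u + m = m -> u <> m ->
  v + n = n -> v <> n -> Scanon (Smul (m, u) (n, v)) = Scanon (m * n, 0).
Proof.
move=> um num vn nvn; rewrite /Smul /=.
have -> : m * n + u * v = m * n.
  by rewrite addrC (@addr_trans _ (m * v)) // -?mulrDl -?mulrDr ?um ?vn.
have [mv0 mvn] : negligible (m * v + u * n) (m * n).
  by apply: negligibleD; [rewrite !(mulrC m) | ]; apply: negligible_mull.
have [mn0|/eqP nmn0] := eqVneq (m * n) 0.
  by move: mv0; rewrite mn0 addr0 => ->.
have nmns : m * n <> m * v + u * n.
  by move=> e; apply: nmn0; rewrite e; apply/mvn/esym.
by rewrite !Scanon_pos // ?addr0 // addrC.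
Qed.

Lemma Scanon_Smul_posl (m u : X) (q : SX X) : u + m = m -> u <> m ->
  Scanon (Smul (m, u) q) = Scanon (Smul (m, 0) q).
Proof.
move=> um num; have nm0 : (0 : X) <> m.
  by move=> m0; apply: num; rewrite -m0 addr0 in um; rewrite um.
have pos n v : v + n = n -> v <> n ->
    Scanon (Smul (m, u) (n, v)) = Scanon (Smul (m, 0) (n, v)).
  by move=> vn nvn; rewrite !Scanon_Smul_pos // add0r.
case: q => n v; case: (order_cases n v) => [<-|[nv nnv]|[nv nnv]].
- by rewrite /Smul /= !mul0r !addr0 -mulrDl (addrC m) um.
- by apply: pos; [rewrite addrC | move/esym].
- by rewrite -[(n, v)]/(Sswap (v, n)) !Smul_swapr !Scanon_swap pos.
Qed.

Lemma Scanon_Smull (p q : SX X) : Scanon (Smul p q) = Scanon (Smul (Scanon p) q).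
Proof.
case: p => a b; case: (order_cases a b) => [<-|[ab nab]|[ab nab]].
- by rewrite Scanon_diag.
- by rewrite Scanon_pos //; apply: Scanon_Smul_posl; [rewrite addrC | move/esym].
- rewrite Scanon_neg // -[(a, b)]/(Sswap (b, a)) -[(0, b)]/(Sswap (b, 0)).
  by rewrite !Smul_swapl !Scanon_swap Scanon_Smul_posl.
Qed.

Lemma Scanon_Smul (p q : SX X) :
  Scanon (Smul p q) = Scanon (Smul (Scanon p) (Scanon q)).
Proof. by rewrite Scanon_Smull Smul_comm Scanon_Smull Smul_comm. Qed.

Lemma Smag_Sadd (p q : SX X) : Smag (Sadd p q) = Smag p + Smag q.
Proof. by rewrite /Smag /Sadd /= addrACA. Qed.

Lemma Smag_Scanon (p : SX X) : Smag (Scanon p) = Smag p.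
Proof.
case: p => a b; rewrite /Smag; case: (order_cases a b) => [<-|[ab nab]|[ab nab]].
- by rewrite Scanon_diag.
- by rewrite Scanon_pos //= addr0.
- by rewrite Scanon_neg //= add0r.
Qed.

Lemma Scanon_Sadd_negligible (p : SX X) (u v : X) :
  negligible u (Smag p) -> negligible v (Smag p) ->
  Scanon (Sadd p (u, v)) = Scanon p.
Proof.
have top a b u' v' : a + b = a -> negligible u' a -> negligible v' a ->
    Scanon (a + u', b + v') = Scanon (a, b).
  move=> ab [ua _] [va va0]; rewrite addrC ua.
  have [<-|/eqP nab] := eqVneq a b; first by rewrite addrC va.
  rewrite (Scanon_pos ab nab) Scanon_pos //; first by rewrite addrA ab addrC va.
  move=> e; case: (addr_max b v') => bv; rewrite bv in e => //.
  have a0 : a = 0 by rewrite e; apply/va0/esym.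
  by apply: nab; rewrite a0 add0r in ab; rewrite a0 ab.
case: p => a b; rewrite /Smag /Sadd /=; case: (addr_max a b) => ab.
  by rewrite ab; apply: top.
rewrite ab -[(a + u, b + v)]/(Sswap (b + v, a + u)) -[(a, b)]/(Sswap (b, a)).
by move=> nu nv; rewrite !Scanon_swap top // addrC.
Qed.

Lemma Scanon_decomp (p : SX X) : exists u v : X,
  [/\ p = Sadd (Scanon p) (u, v), negligible u (Smag p) & negligible v (Smag p)].
Proof.
case: p => a b; rewrite /Smag /=.
case: (order_cases a b) => [<-|[ab nab]|[ab nab]].
- exists 0, 0; rewrite Scanon_diag /Sadd /= !addr0.
  by split=> //; apply: negligible0.
- exists 0, b; rewrite Scanon_pos // /Sadd /= addr0 add0r.
  split; [by [] | exact: negligible0 |].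
  by split=> [|e]; [rewrite addrCA addxx | rewrite ab in e; case: nab].
- exists a, 0; rewrite Scanon_neg // /Sadd /= addr0 add0r.
  split; [by [] | | exact: negligible0].
  by split=> [|e]; [rewrite addrA addxx | rewrite ab in e; case: nab].
Qed.

Lemma Scanon_Sadd (p q : SX X) :
  Scanon (Sadd p q) = Scanon (Sadd (Scanon p) (Scanon q)).
Proof.
have [u [v [Ep nu nv]]] := Scanon_decomp p.
have [u' [v' [Eq nu' nv']]] := Scanon_decomp q.
rewrite {1}Ep {1}Eq.
have -> : Sadd (Sadd (Scanon p) (u, v)) (Sadd (Scanon q) (u', v')) =
    Sadd (Sadd (Scanon p) (Scanon q)) (u + u', v + v').
  by rewrite /Sadd /=; congr pair; apply: addrACA.
apply: Scanon_Sadd_negligible; rewrite Smag_Sadd !Smag_Scanon;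
  by apply: negligibleD; [apply: negligibleWl | apply: negligibleWr].
Qed.

Lemma Scanon_idem (p : SX X) : Scanon (Scanon p) = Scanon p.
Proof.
case: p => a b; case: (order_cases a b) => [<-|[ab nab]|[ab nab]].
- by rewrite !Scanon_diag.
- rewrite Scanon_pos //; apply: Scanon_pos; first exact: addr0.
  by move=> a0; apply: nab; rewrite a0 add0r in ab; rewrite a0 ab.
- rewrite Scanon_neg //; apply: Scanon_neg; first exact: add0r.
  by move=> b0; apply: nab; rewrite -b0 addr0 in ab; rewrite -b0 ab.
Qed.

Lemma Scanon_diag_inv (p : SX X) : (Scanon p).1 = (Scanon p).2 -> p.1 = p.2.
Proof.
case: p => a b /=; case: (order_cases a b) => [<-|[ab nab]|[ab nab]] //.
- by rewrite Scanon_pos //= => a0; rewrite a0 add0r in ab; rewrite a0 ab.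
- by rewrite Scanon_neg //= => b0; rewrite -b0 addr0 in ab; rewrite -b0 ab.
Qed.

Lemma Ssim_pos_fst (a1 a2 b1 b2 : X) : a1 + a2 = a1 -> a1 <> a2 ->
  b1 + b2 = b1 -> b1 <> b2 -> a1 + b2 = a2 + b1 -> a1 = b1.
Proof.
move=> ha na hb nb e; case: (addr_max a1 b1) => h.
- have h2 : b2 + a1 = a1 by apply: (@addr_trans _ b1); rewrite addrC.
  rewrite addrC h2 in e.
  by case: (addr_max a2 b1) => e2; rewrite e2 in e.
- have h2 : a2 + b1 = b1 by apply: (@addr_trans _ a1) => //; rewrite addrC.
  rewrite h2 in e.
  by case: (addr_max a1 b2) => e2; rewrite e2 in e => //; case: nb.
Qed.

Lemma Ssim_pos_neg_false (a1 a2 b1 b2 : X) : a1 + a2 = a1 -> a1 <> a2 ->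
  b1 + b2 = b2 -> b1 <> b2 -> a1 + b2 = a2 + b1 -> False.
Proof.
move=> ha na hb nb e; case: (addr_max a2 b1) => h; rewrite h in e.
- by apply: na; apply: addr_anti; [rewrite -e addrA addxx | rewrite addrC].
- by apply: nb; apply: addr_anti; [ | rewrite -e addrCA addxx].
Qed.

Lemma Ssim_canon (p q : SX X) : Ssim p q <-> Scanon p = Scanon q.
Proof.
case: p q => [a1 a2] [b1 b2]; split.
- case=> [->//|[/= na [nb e]]].
  case: (order_cases a1 a2) => [//|[ha _]|[ha _]];
  case: (order_cases b1 b2) => [//|[hb _]|[hb _]].
  + by rewrite !Scanon_pos // (Ssim_pos_fst ha na hb nb e).
  + by case: (Ssim_pos_neg_false ha na hb nb e).
  + by case: (Ssim_pos_neg_false hb nb ha na); rewrite addrC -e addrC.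
  + rewrite !Scanon_neg //; congr pair; apply: (@Ssim_pos_fst a2 a1 b2 b1);
      first [by rewrite addrC | by move/esym | by rewrite e].
- move=> E; have [da|/eqP na] := eqVneq a1 a2.
    have db : b1 = b2.
      by apply: (@Scanon_diag_inv (b1, b2)); rewrite -E da Scanon_diag.
    by left; move: E; rewrite da db !Scanon_diag.
  have [db|/eqP nb] := eqVneq b1 b2.
    by case: na; apply: (@Scanon_diag_inv (a1, a2)); rewrite E db Scanon_diag.
  right; split=> //; split=> //=.
  case: (order_cases a1 a2) => [/na//|[ha _]|[ha _]];
  case: (order_cases b1 b2) => [/nb//|[hb _]|[hb _]];
  rewrite ?(Scanon_pos ha na) ?(Scanon_neg ha na) ?(Scanon_pos hb nb)
    ?(Scanon_neg hb nb) in E;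
  move: (congr1 fst E) (congr1 snd E) => /= e1 e2.
  + by rewrite -e1 in hb *; rewrite hb addrC ha.
  + by case: na; rewrite e1 add0r in ha; rewrite e1 ha.
  + by case: nb; rewrite -e1 add0r in hb; rewrite -e1 hb.
  + by rewrite -e2 in hb *; rewrite ha addrC hb.
Qed.

Lemma Ssim_congruence : is_congruence (@Ssim X).
Proof.
split.
- by left.
- by move=> a b /Ssim_canon ab; apply/Ssim_canon.
- by move=> a b c /Ssim_canon ab /Ssim_canon bc; apply/Ssim_canon; rewrite ab.
- move=> a a' b b' /Ssim_canon aa /Ssim_canon bb; apply/Ssim_canon.
  by rewrite Scanon_Sadd aa bb -Scanon_Sadd.
- move=> a a' b b' /Ssim_canon aa /Ssim_canon bb; apply/Ssim_canon.
  by rewrite Scanon_Smul aa bb -Scanon_Smul.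
Qed.

Lemma Scanon_shape (p : SX X) :
  [\/ Scanon p = (Smag p, Smag p), Scanon p = (Smag p, 0)
    | Scanon p = (0, Smag p)].
Proof.
case: p => a b; rewrite /Smag /=.
case: (order_cases a b) => [<-|[ab nab]|[ab nab]].
- by rewrite Scanon_diag addxx; apply: Or31.
- by rewrite Scanon_pos // ab; apply: Or32.
- by rewrite Scanon_neg // ab; apply: Or33.
Qed.

Lemma Scanon_Sadd_same_mag (a x b : SX X) :
  Scanon (Sadd a x) = Scanon b -> Smag a = Smag b ->
  Scanon b = Scanon a \/ Scanon b = (Smag b, Smag b).
Proof.
move=> E ab; have ax : Smag a + Smag x = Smag a.
  by rewrite -Smag_Sadd -Smag_Scanon E Smag_Scanon.
rewrite Scanon_Sadd in E; rewrite -E -ab.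
have [xa|/eqP nxa] := eqVneq (Smag x) (Smag a).
  move: (Scanon_idem a); case: (Scanon_shape a) => ->;
  case: (Scanon_shape x) => ->; rewrite xa /Sadd /= ?addxx ?addr0 ?add0r => idem_a;
  first [by right; rewrite Scanon_diag | by left].
left; have nx : negligible (Smag x) (Smag (Scanon a)).
  by rewrite Smag_Scanon; split=> [|/nxa //]; rewrite addrC.
by case: (Scanon_shape x) => ->; rewrite Scanon_Sadd_negligible ?Scanon_idem //;
  exact: negligible0.
Qed.

Lemma quot_upper_bound_Ssim : quot_upper_bound X.
Proof.
move=> a b [x /Ssim_canon Ex] [y /Ssim_canon Ey]; apply/Ssim_canon.
have mab : Smag b = Smag a + Smag x.
  by rewrite -Smag_Scanon -Ex Smag_Scanon Smag_Sadd.
have mba : Smag a = Smag b + Smag y.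
  by rewrite -Smag_Scanon -Ey Smag_Scanon Smag_Sadd.
have mag_eq : Smag a = Smag b.
  by apply: addr_anti; [rewrite mab addrA addxx | rewrite mba addrA addxx].
case: (Scanon_Sadd_same_mag Ex mag_eq) => [->//|Eb].
case: (Scanon_Sadd_same_mag Ey (esym mag_eq)) => [//|Ea].
by rewrite Ea Eb mag_eq.
Qed.

End IdempotentLinear.

Theorem lemma6p3 (X : comPzSemiRingType) :
  (is_congruence (@Ssim X) /\ quot_upper_bound X) <->
  [/\ idempotent_sr X, linearly_ordered_sr X &
      forall a b x : X, ilt a b -> a * x = 0 \/ ilt (a * x) (b * x)].
Proof.
split=> [[simC _]|[addxx lin mul_ilt]].
  split; [exact: idempotent_of_congruence | exact: linearly_ordered_of_congruence
    | exact: mul_ilt_of_congruence].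
by split; [exact: Ssim_congruence | exact: quot_upper_bound_Ssim].
Qed.
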